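(* Consider the Utility Maximization problem in the MPOI world with ground set $J$, downward-closed constraints $\mathcal{F}$ with convex relaxation $P_{\mathcal{F}}$, additive objective $f(I,x)=\sum_{i\in I}x_i$, and DAG Markov systems $S_i=(V_i,P_i,s_i,T_i,\pi_i,r_i)$, $i\in J$, with non-negative values. Then the optimal utility of an adaptive strategy (without any commitment constraint) is at most the optimal value of the linear program $$\max\ \sum_{i\in J}\Big(\sum_{u\in T_i}r_i^u z_i^u-\sum_{u\in V_i\setminus T_i}\pi_i^u z_i^u\Big)$$ subject to: $y_i^{s_i}=1$ for all $i\in J$; $y_i^u=\sum_{v\in V_i}(P_i)_{vu}\,z_i^v$ for all $i\in J$, $u\in V_i\setminus\{s_i\}$; $x_i=\sum_{u\in T_i}z_i^u$ for all $i\in J$; $z_i^u\le y_i^u$ for all $i\in J$, $u\in V_i$; $x\in P_{\mathcal{F}}$; and $x_i,y_i^u,z_i^u\ge0$ for all $i\in J$, $u\in V_i$.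
   Context: A Markov system $S=(V,P,s,T,\pi,r)$ consists of a Markov chain on a finite state space $V$ with transition matrix $P$ ($P_{uv}$ is the probability of moving from $u$ to $v$), a starting state $s$, a set $T\subseteq V$ of absorbing destination states, prices $\pi^u\ge0$ for $u\in V\setminus T$, and values $r^t\ge0$ for $t\in T$; every state reaches some destination state. It is a DAG Markov system if the directed graph with an arc $u\to v$ whenever $u\notin T$ and $P_{uv}>0$ is acyclic. Utility Maximization in the MPOI world: each $S_i$ starts at $s_i$; at each step the player either advances some $S_i$ from its current non-destination state $u$, paying $\pi_i^u$ (the state then moves randomly according to $P_i$), or ends the game by selecting a set $I\in\mathcal{F}$ of ready elements (elements whose Markov system is in a destination state). The utility of an adaptive strategy is $\mathbb{E}[\sum_{i\in I}r_i^{\mathrm{dest}(i)}-\text{total price paid}]$. $P_{\mathcal{F}}\subseteq[0,1]^J$ is a convex set containing the indicator vectors of all sets in $\mathcal{F}$. (Intended meaning of variables: $y_i^u$ = probability state $u$ of $S_i$ is reached, $z_i^u$ = probability $S_i$ is played from $u$, or selected when $u\in T_i$.) *)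

From HB Require Import structures.
From mathcomp Require Import all_boot all_order all_algebra.
Set Implicit Arguments. Unset Strict Implicit. Unset Printing Implicit Defensive.
Import Order.TTheory GRing.Theory Num.Theory.
Local Open Scope ring_scope.

(* P u v = probability of moving from u to v; dest = T; price u = pi^u
   (relevant for u \notin T); value t = r^t (relevant for t \in T). *)
Record MarkovSys (R : realFieldType) (V : finType) := MkMS {
  P : V -> V -> R;
  start : V;
  dest : {set V};
  price : V -> R;
  value : V -> R
}.

Definition ms_arc (R : realFieldType) (V : finType) (S : MarkovSys R V) : rel V :=
  fun u v => (u \notin dest S) && (0 < P S u v).

Definition markov_system (R : realFieldType) (V : finType) (S : MarkovSys R V) : Prop :=
  [/\ (forall u v, 0 <= P S u v),
      (forall u, \sum_(v : V) P S u v = 1),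
      (forall t, t \in dest S -> P S t t = 1) &
      (forall u, exists2 t, t \in dest S & connect (ms_arc S) u t)].

Definition dag_markov_system (R : realFieldType) (V : finType) (S : MarkovSys R V) : Prop :=
  markov_system S /\ (forall u v, ms_arc S u v -> ~~ connect (ms_arc S) v u).

Definition nonneg_ms (R : realFieldType) (V : finType) (S : MarkovSys R V) : Prop :=
  (forall u, u \notin dest S -> 0 <= price S u) /\
  (forall t, t \in dest S -> 0 <= value S t).

Section World.
Variables (R : realFieldType) (J : finType) (V : J -> finType).
Variable (M : forall i : J, MarkovSys R (V i)).
Variable (F : {set {set J}}).

Definition jstate := forall i : J, V i.

Definition jstart : jstate := fun i => start (M i).

Inductive action := Advance of J | Select of {set J}.

(* An adaptive (deterministic, history-dependent) strategy: maps the
   history of observed configurations (after the initial one) to an action. *)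
Definition strategy := seq jstate -> action.

Definition cur (h : seq jstate) : jstate := last jstart h.

Definition legal (st : jstate) (a : action) : bool :=
  match a with
  | Advance i => st i \notin dest (M i)
  | Select A => (A \in F) && [forall i in A, st i \in dest (M i)]
  end.

Definition valid_strategy (sigma : strategy) : Prop :=
  forall h, legal (cur h) (sigma h).

Fixpoint util_from (sigma : strategy) (n : nat) (h : seq jstate) : R :=
  match n with
  | 0 => 0
  | n'.+1 =>
    let st := cur h in
    match sigma h with
    | Select A => \sum_(i in A) value (M i) (st i)
    | Advance i =>
        - price (M i) (st i)
        + \sum_(v : V i) P (M i) (st i) v * util_from sigma n' (rcons h (dfwith st v))
    end
  end.

(* Every valid strategy on DAG Markov systems ends after fewer than
   \sum_i #|V i| decisions, so this horizon computes its full expected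
   utility. *)
Definition horizon : nat := (\sum_(i : J) #|V i|)%N.

Definition utility (sigma : strategy) : R := util_from sigma horizon [::].

Variable (PF : (J -> R) -> Prop).

Definition lp_feasible (x : J -> R) (y z : forall i : J, V i -> R) : Prop :=
  [/\ (forall i, y i (start (M i)) = 1),
      (forall i (u : V i), u != start (M i) ->
          y i u = \sum_(v : V i) P (M i) v u * z i v),
      (forall i, x i = \sum_(u in dest (M i)) z i u),
      (forall i (u : V i), z i u <= y i u) &
      [/\ PF x, (forall i, 0 <= x i), (forall i (u : V i), 0 <= y i u)
        & (forall i (u : V i), 0 <= z i u)]].

Definition lp_objective (z : forall i : J, V i -> R) : R :=
  \sum_(i : J) (\sum_(u in dest (M i)) value (M i) u * z i u
                - \sum_(u in ~: dest (M i)) price (M i) u * z i u).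

End World.

Definition downward_closed (J : finType) (F : {set {set J}}) : Prop :=
  set0 \in F /\ (forall A B : {set J}, A \in F -> B \subset A -> B \in F).

Definition convex_relaxation (R : realFieldType) (J : finType)
    (F : {set {set J}}) (PF : (J -> R) -> Prop) : Prop :=
  [/\ (forall x, PF x -> forall i, 0 <= x i <= 1),
      (forall a b (t : R), PF a -> PF b -> 0 <= t <= 1 ->
          PF (fun i => t * a i + (1 - t) * b i)) &
      (forall A, A \in F -> PF (fun i => if i \in A then 1 else 0))].

From mathcomp Require Import all_boot all_order all_algebra.
From mathcomp Require Import ring.
From Stdlib Require Import FunctionalExtensionality.
Unset Printing Implicit Defensive.
Import Order.TTheory GRing.Theory Num.Theory.
Local Open Scope ring_scope.

(* Fix an adaptive strategy and let z_i^u be the expected number of times S_i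
   is advanced from a non-destination state u, resp. the probability that i is
   selected while S_i sits in the destination u; let y_i^u be 1 at s_i and the
   flow into u elsewhere.  By linearity of expectation the utility of the
   strategy equals the LP objective at z.  The point (x, y, z) is feasible:
   flow conservation holds with inequality because the strategy may stop
   before leaving a state; z_i^{s_i} <= 1 because in a DAG a state once left
   is never revisited; and x is an average, over the random play, of indicator
   vectors of feasible sets, hence lies in the convex set P_F. *)

Section Averages.
Context {R : realFieldType}.

Lemma ler_avg {W : finType} (p g : W -> R) (c : R) :
  (forall w, 0 <= p w) -> \sum_w p w = 1 ->
  (forall w, 0 < p w -> g w <= c) -> \sum_w p w * g w <= c.
Proof.
move=> p_ge0 p_sum1 g_le; rewrite -[leRHS]mul1r -p_sum1 mulr_suml.
apply: ler_sum => w _; have := p_ge0 w; rewrite le0r => /orP[/eqP->|p_gt0].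
  by rewrite !mul0r.
by rewrite ler_wpM2l ?g_le // ltW.
Qed.

Lemma sum_mul_indicator {W : finType} (f : W -> R) (u : W) :
  \sum_w f w * (w == u)%:R = f u.
Proof.
rewrite (bigD1 u) //= eqxx mulr1 big1 ?addr0 // => w /negbTE->.
by rewrite mulr0.
Qed.

Lemma sumr_mul_exchange {A B : finType} (a : A -> R) (p : B -> R) (b : B -> A -> R) :
  \sum_u a u * (\sum_v p v * b v u) = \sum_v p v * (\sum_u a u * b v u).
Proof.
under eq_bigr do rewrite mulr_sumr.
rewrite exchange_big; apply: eq_bigr => v _; rewrite mulr_sumr.
by apply: eq_bigr => u _; rewrite mulrCA.
Qed.

Context {J : Type}.
Variable C : (J -> R) -> Prop.
Hypothesis C_convex : forall a b (t : R), C a -> C b -> 0 <= t <= 1 ->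
  C (fun i => t * a i + (1 - t) * b i).

(* Normalizing by the total weight lets the induction peel off one point at a
   time as a two-point convex combination. *)
Lemma convex_normalized_sum {W : eqType} {p : W -> R} {f : W -> J -> R} (s : seq W) :
  (forall w, 0 <= p w) -> (forall w, C (f w)) -> 0 < \sum_(w <- s) p w ->
  C (fun i => (\sum_(w <- s) p w * f w i) / \sum_(w <- s) p w).
Proof.
move=> p_ge0 f_C; elim: s => [|w s IH]; first by rewrite big_nil ltxx.
rewrite big_cons; set c := \sum_(w <- s) p w.
have c_ge0 : 0 <= c by apply: sumr_ge0.
have [c0 pw_gt0|c_neq0 _] := eqVneq c 0.
  have sum0 i : \sum_(v <- s) p v * f v i = 0.
    move/eqP: c0; rewrite psumr_eq0 // => /allP s0.
    by apply: big1_seq => v /andP[_ /s0 /eqP->]; rewrite mul0r.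
  rewrite c0 addr0 in pw_gt0 *.
  suff -> : (fun i => (\sum_(v <- w :: s) p v * f v i) / p w) = f w by [].
  apply: functional_extensionality => i.
  by rewrite big_cons sum0 addr0 mulrAC divff ?mul1r // gt_eqF.
have c_gt0 : 0 < c by rewrite lt0r c_neq0.
have pc_gt0 : 0 < p w + c by apply: ltr_wpDl.
pose t := p w / (p w + c).
suff -> : (fun i => (\sum_(v <- w :: s) p v * f v i) / (p w + c)) =
    (fun i => t * f w i + (1 - t) * ((\sum_(v <- s) p v * f v i) / c)).
  apply: C_convex => //; first exact: IH.
  by rewrite divr_ge0 ?addr_ge0 //= ler_pdivrMr // mul1r lerDl.
apply: functional_extensionality => i; rewrite big_cons /t; field.
by rewrite c_neq0 gt_eqF.
Qed.

Lemma convex_avg {W : finType} {p : W -> R} {f : W -> J -> R} :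
  (forall w, 0 <= p w) -> \sum_w p w = 1 -> (forall w, C (f w)) ->
  C (fun i => \sum_w p w * f w i).
Proof.
move=> p_ge0 p_sum1 f_C.
have := convex_normalized_sum (index_enum W) p_ge0 f_C.
rewrite p_sum1 ltr01 => /(_ isT).
by under [X in C X -> _]functional_extensionality do rewrite divr1.
Qed.

End Averages.

Section Strategy.
Context {R : realFieldType} {J : finType} {V : J -> finType}.
Context {M : forall i : J, MarkovSys R (V i)} {F : {set {set J}}} {sigma : strategy V}.

Definition next_hist (h : seq (jstate V)) {j} (v : V j) := rcons h (dfwith (cur M h) v).

Lemma cur_next_hist h j (v : V j) : cur M (next_hist h v) = dfwith (cur M h) v.
Proof. by rewrite /cur /next_hist last_rcons. Qed.

Fixpoint played (n : nat) (h : seq (jstate V)) : forall i, V i -> R :=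
  if n is n'.+1 then
    if sigma h is Advance j then fun i u => ((j == i) && (cur M h i == u))%:R
      + \sum_(v : V j) P (M j) (cur M h j) v * played n' (next_hist h v) i u
    else fun _ _ => 0
  else fun _ _ => 0.

Fixpoint selected (n : nat) (h : seq (jstate V)) : forall i, V i -> R :=
  if n is n'.+1 then
    if sigma h is Advance j then fun i u =>
      \sum_(v : V j) P (M j) (cur M h j) v * selected n' (next_hist h v) i u
    else if sigma h is Select A then fun i u => ((i \in A) && (cur M h i == u))%:R
    else fun _ _ => 0
  else fun _ _ => 0.

Definition strategy_z n i (u : V i) :=
  if u \in dest (M i) then selected n [::] i u else played n [::] i u.

Definition strategy_y n i (u : V i) :=
  if u == start (M i) then 1 else \sum_v P (M i) v u * strategy_z n i v.

Definition strategy_x n i := \sum_(u in dest (M i)) selected n [::] i u.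

Lemma sum_jstate_indicator (f : forall i, V i -> R) (st : jstate V) j :
  \sum_i \sum_(u : V i) f i u * ((j == i) && (st i == u))%:R = f j (st j).
Proof.
rewrite (bigD1 j) //= [X in _ + X]big1 ?addr0 => [|i /negbTE ji]; last first.
  by apply: big1 => u _; rewrite eq_sym ji mulr0.
rewrite eqxx /=; under eq_bigr do rewrite eq_sym.
by rewrite sum_mul_indicator.
Qed.

Lemma util_from_decomp n h : util_from M sigma n h =
  \sum_i (\sum_u value (M i) u * selected n h i u
          - \sum_u price (M i) u * played n h i u).
Proof.
elim: n h => [|n IH] h /=.
  by rewrite big1 // => i _; rewrite !big1 ?subrr // => u _; rewrite mulr0.
case: (sigma h) => [j|A].
  under eq_bigr do rewrite IH mulr_sumr.
  under [RHS]eq_bigr do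
    rewrite (eq_bigr _ (fun u _ => mulrDr _ _ _)) big_split /= opprD addrA addrAC.
  rewrite addrC sumrB sum_jstate_indicator; congr (_ - _).
  rewrite exchange_big; apply: eq_bigr => i _.
  rewrite (sumr_mul_exchange (value (M i))) (sumr_mul_exchange (price (M i))) -sumrB.
  by apply: eq_bigr => v _; rewrite mulrBr.
rewrite big_mkcond; apply: eq_bigr => i _.
rewrite [X in _ - X]big1 ?subr0 => [|u _]; last by rewrite mulr0.
case: (i \in A) => /=; last by rewrite big1 // => u _; rewrite mulr0.
under eq_bigr do rewrite eq_sym.
by rewrite sum_mul_indicator.
Qed.

Hypothesis P_ge0 : forall i u v, 0 <= P (M i) u v.

Lemma played_ge0 n h i u : 0 <= played n h i u.
Proof.
elim: n h => [|n IH] h //=; case: (sigma h) => [j|A] //.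
by rewrite addr_ge0 ?ler0n ?sumr_ge0 // => v _; rewrite mulr_ge0.
Qed.

Lemma selected_ge0 n h i u : 0 <= selected n h i u.
Proof.
elim: n h => [|n IH] h //=; case: (sigma h) => [j|A] //.
by rewrite sumr_ge0 // => v _; rewrite mulr_ge0.
Qed.

Lemma strategy_z_ge0 n i u : 0 <= strategy_z n i u.
Proof. by rewrite /strategy_z; case: ifP; rewrite ?selected_ge0 ?played_ge0. Qed.

Hypothesis P_sum1 : forall i u, \sum_v P (M i) u v = 1.

Lemma selected_le1 n h i u : selected n h i u <= 1.
Proof.
elim: n h => [|n IH] h /=; first exact: ler01.
case: (sigma h) => [j|A]; last by rewrite lern1 leq_b1.
exact: ler_avg.
Qed.

Lemma indicator_balance h j i (u : V i) :
  ((j == i) && (cur M h i == u))%:R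
    + \sum_w P (M j) (cur M h j) w * (cur M (next_hist h w) i == u)%:R
  = (cur M h i == u)%:R + \sum_v P (M i) v u * ((j == i) && (cur M h i == v))%:R.
Proof.
have [ji|ji] := eqVneq j i; last first.
  under eq_bigr do rewrite cur_next_hist dfwith_out //.
  rewrite /= add0r -mulr_suml P_sum1 mul1r big1 ?addr0 // => v _.
  by rewrite mulr0.
subst j; under eq_bigr do rewrite cur_next_hist dfwith_in.
under [in RHS]eq_bigr do rewrite eq_sym.
by rewrite !sum_mul_indicator.
Qed.

Lemma played_flow n h i u :
  played n h i u <= (cur M h i == u)%:R + \sum_v P (M i) v u * played n h i v.
Proof.
elim: n h => [|n IH] h /=.
  by rewrite big1 ?addr0 ?ler0n // => v _; rewrite mulr0.
case: (sigma h) => [j|A]; last first.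
  by rewrite big1 ?addr0 ?ler0n // => v _; rewrite mulr0.
set s := cur M h j.
have IH_avg : \sum_w P (M j) s w * played n (next_hist h w) i u <=
    \sum_w P (M j) s w * ((cur M (next_hist h w) i == u)%:R
      + \sum_v P (M i) v u * played n (next_hist h w) i v).
  by apply: ler_sum => w _; rewrite ler_wpM2l.
apply: le_trans (lerD (lexx _) IH_avg) _.
under [X in _ + X <= _]eq_bigr do rewrite mulrDr.
under [X in _ <= _ + X]eq_bigr do rewrite mulrDr.
rewrite !big_split /= !addrA indicator_balance.
by rewrite (sumr_mul_exchange (P (M i) ^~ u)).
Qed.

Hypothesis sigma_valid : valid_strategy M F sigma.

Lemma selected_nondest n h i u : u \notin dest (M i) -> selected n h i u = 0.
Proof.
move=> u_nondest; elim: n h => [|n IH] h //=.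
have := sigma_valid h; case: (sigma h) => [j|A] /= legal_a.
  by rewrite big1 // => v _; rewrite IH mulr0.
case/andP: legal_a => _ /forall_inP A_ready.
case: (boolP (i \in A)) => //= iA; case: eqP => // cur_u.
by rewrite -cur_u A_ready in u_nondest.
Qed.

Lemma played_dest n h i u : u \in dest (M i) -> played n h i u = 0.
Proof.
move=> u_dest; elim: n h => [|n IH] h //=.
have := sigma_valid h; case: (sigma h) => [j|A] //= legal_j.
rewrite big1 ?addr0 => [|v _]; last by rewrite IH mulr0.
have [ji|//] := eqVneq j i; subst j.
case: eqP => //= cur_u.
by rewrite cur_u u_dest in legal_j.
Qed.

Lemma util_from_objective n : util_from M sigma n [::] = lp_objective M (strategy_z n).
Proof.
rewrite util_from_decomp; apply: eq_bigr => i _; congr (_ - _).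
  rewrite [RHS]big_mkcond; apply: eq_bigr => u _; rewrite /strategy_z.
  by case: (boolP (u \in dest (M i))) => [//|/selected_nondest->]; rewrite mulr0.
rewrite [RHS]big_mkcond; apply: eq_bigr => u _; rewrite /strategy_z in_setC.
by case: (boolP (u \in dest (M i))) => [/played_dest->|//]; rewrite mulr0.
Qed.

Hypothesis acyclic :
  forall i (u v : V i), ms_arc (M i) u v -> ~~ connect (ms_arc (M i)) v u.

Lemma played_le_connect n h i u :
  played n h i u <= (connect (ms_arc (M i)) (cur M h i) u)%:R.
Proof.
elim: n h => [|n IH] h /=; first by rewrite ler0n.
have := sigma_valid h; case: (sigma h) => [j|A] /= legal_j; last by rewrite ler0n.
have [ji|ji] := eqVneq j i; last first.
  rewrite add0r; apply: ler_avg => // w _.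
  by have := IH (next_hist h w); rewrite cur_next_hist dfwith_out.
subst j; set s := cur M h i.
have later_le : \sum_w P (M i) s w * played n (next_hist h w) i u <=
    (connect (ms_arc (M i)) s u && (s != u))%:R.
  apply: ler_avg => // w P_sw_gt0.
  apply: le_trans (IH _) _; rewrite cur_next_hist dfwith_in ler_nat.
  have arc_sw : ms_arc (M i) s w by rewrite /ms_arc legal_j P_sw_gt0.
  case: (boolP (connect _ w u)) => //= conn_wu.
  have s_neq_u : s != u by apply: contraNneq (acyclic _ _ _ arc_sw) => ->.
  by rewrite (connect_trans (connect1 arc_sw) conn_wu) s_neq_u.
apply: le_trans (lerD (lexx _) later_le) _.
have [<-|_] /= := eqVneq s u; last by rewrite add0r andbT.
by rewrite connect0 andbF addr0.
Qed.

Variable PF : (J -> R) -> Prop.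
Hypothesis PF_convex : forall a b (t : R), PF a -> PF b -> 0 <= t <= 1 ->
  PF (fun i => t * a i + (1 - t) * b i).
Hypothesis PF_indicator : forall A, A \in F -> PF (fun i => if i \in A then 1 else 0).
Hypothesis F_set0 : set0 \in F.

Lemma selected_marginal_in n h : PF (fun i => \sum_(u in dest (M i)) selected n h i u).
Proof.
have PF_ext f g : f =1 g -> PF f -> PF g by move=> /functional_extensionality->.
elim: n h => [|n IH] h /=.
  by apply: PF_ext (PF_indicator _ F_set0) => i; rewrite in_set0 big1.
have := sigma_valid h; case: (sigma h) => [j|A] /= legal_a.
  have := convex_avg _ PF_convex (P_ge0 j (cur M h j)) (P_sum1 _ _)
    (fun v => IH (next_hist h v)).
  apply: PF_ext => i.
  by rewrite exchange_big; apply: eq_bigr => v _; rewrite mulr_sumr.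
case/andP: legal_a => /PF_indicator PF_A /forall_inP A_ready.
apply: PF_ext PF_A => i; case: (boolP (i \in A)) => //= iA; last by rewrite big1.
rewrite (bigD1 (cur M h i)) ?A_ready //= eqxx big1 ?addr0 // => u /andP[_].
by rewrite eq_sym => /negbTE->.
Qed.

Hypothesis P_absorbing : forall i t, t \in dest (M i) -> P (M i) t t = 1.

Lemma strategy_z_le_y n i u : strategy_z n i u <= strategy_y n i u.
Proof.
rewrite /strategy_y; have [->|u_neq_s] := eqVneq u (start (M i)).
  rewrite /strategy_z; case: ifP => _; first exact: selected_le1.
  by apply: le_trans (played_le_connect _ _ _ _) _; rewrite lern1 leq_b1.
case: (boolP (u \in dest (M i))) => u_dest.
  rewrite (bigD1 u) //= P_absorbing // mul1r lerDl.
  by rewrite sumr_ge0 // => v _; rewrite mulr_ge0 ?strategy_z_ge0.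
rewrite {1}/strategy_z (negbTE u_dest); apply: le_trans (played_flow _ _ _ _) _.
have -> : (cur M [::] i == u) = false by apply/negbTE; rewrite eq_sym.
rewrite add0r; apply: ler_sum => v _; rewrite /strategy_z.
case: ifP => // v_dest; rewrite played_dest // mulr0.
by rewrite mulr_ge0 ?selected_ge0.
Qed.

Lemma strategy_lp_feasible n :
  lp_feasible M PF (strategy_x n) (strategy_y n) (strategy_z n).
Proof.
split.
- by move=> i; rewrite /strategy_y eqxx.
- by move=> i u /negbTE u_neq_s; rewrite /strategy_y u_neq_s.
- by move=> i; apply: eq_bigr => u u_dest; rewrite /strategy_z u_dest.
- exact: strategy_z_le_y.
split.
- exact: selected_marginal_in.
- by move=> i; rewrite sumr_ge0 // => u _; rewrite selected_ge0.
- move=> i u; rewrite /strategy_y; case: ifP => _ //.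
  by rewrite sumr_ge0 // => v _; rewrite mulr_ge0 ?strategy_z_ge0.
- exact: strategy_z_ge0.
Qed.

End Strategy.

Theorem lemma5 (R : realFieldType) (J : finType) (V : J -> finType)
    (M : forall i : J, MarkovSys R (V i))
    (F : {set {set J}}) (PF : (J -> R) -> Prop) :
  downward_closed F ->
  convex_relaxation F PF ->
  (forall i, dag_markov_system (M i)) ->
  (forall i, nonneg_ms (M i)) ->
  forall OPT : R,
    (forall (x : J -> R) (y z : forall i : J, V i -> R),
        lp_feasible M PF x y z -> lp_objective M z <= OPT) ->
  forall sigma : strategy V,
    valid_strategy M F sigma ->
    utility M sigma <= OPT.
Proof.
(* Non-negative prices and values are not needed: the utility equals the
   objective at a feasible point. *)
move=> [F_set0 _] [_ PF_convex PF_indicator] dag _ OPT OPT_ub sigma sigma_valid.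
have P_ge0 i : forall u v, 0 <= P (M i) u v by case: (dag i) => -[].
have P_sum1 i : forall u, \sum_v P (M i) u v = 1 by case: (dag i) => -[].
have P_absorbing i : forall t, t \in dest (M i) -> P (M i) t t = 1.
  by case: (dag i) => -[].
have acyclic i : forall u v, ms_arc (M i) u v -> ~~ connect (ms_arc (M i)) v u.
  by case: (dag i).
rewrite /utility (util_from_objective sigma_valid); apply: OPT_ub.
exact: strategy_lp_feasible.
Qed.
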